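(* Let $\{\rho_\theta\}_{\theta\in\Theta}$ be a differentiable family of density operators on a $d$-dimensional Hilbert space. For $\varepsilon\in(0,1)$ set $\rho_\theta^\varepsilon:=(1-\varepsilon)\rho_\theta+\varepsilon\, I/d$. Then $$\widehat I_F(\theta;\{\rho_\theta\}_\theta)=\lim_{\varepsilon\to 0}\widehat I_F(\theta;\{\rho^\varepsilon_\theta\}_\theta),$$ including the case where the left-hand side equals $+\infty$.
   Context: All Hilbert spaces are finite-dimensional; $\Theta\subseteq\mathbb{R}$ and $\partial_\theta$ denotes the derivative with respect to $\theta$. For a differentiable family $\{\rho_\theta\}_\theta$ of density operators, the RLD Fisher information is $\widehat I_F(\theta;\{\rho_\theta\}_\theta)=\operatorname{Tr}[(\partial_\theta\rho_\theta)^2\rho_\theta^{-1}]$ if $\operatorname{supp}(\partial_\theta\rho_\theta)\subseteq\operatorname{supp}(\rho_\theta)$, and $+\infty$ otherwise, where $\rho_\theta^{-1}$ is the inverse on the support of $\rho_\theta$. *)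

From HB Require Import structures.
From mathcomp Require Import all_boot all_order all_algebra.
From mathcomp Require Import all_classical all_reals all_analysis.
From mathcomp Require Import complex.
Set Implicit Arguments. Unset Strict Implicit. Unset Printing Implicit Defensive.
Import Order.TTheory GRing.Theory Num.Theory.
Import numFieldNormedType.Exports.
Local Open Scope ring_scope.
Local Open Scope classical_set_scope.

Section QDefs.
Variable R : realType.
Local Notation C := (R[i]).

Definition adjmx m n (A : 'M[C]_(m, n)) : 'M[C]_(n, m) := (map_mx Num.conj A)^T.

Definition hermitian n (A : 'M[C]_n) : Prop := adjmx A = A.

Definition psd n (A : 'M[C]_n) : Prop :=
  hermitian A /\ forall v : 'cV[C]_n, 0 <= (adjmx v *m A *m v) 0 0.

Definition density n (A : 'M[C]_n) : Prop := psd A /\ \tr A = 1.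

(* support (range = column space) inclusion: supp A ⊆ supp B *)
Definition supp_sub n (A B : 'M[C]_n) : bool := (A^T <= B^T)%MS.

(* Moore--Penrose pseudo-inverse; for a Hermitian A it is the inverse of A on its support *)
Definition mp_inverse n (A : 'M[C]_n) : 'M[C]_n :=
  xget 0 (fun X : 'M[C]_n =>
    [/\ A *m X *m A = A, X *m A *m X = X,
        adjmx (A *m X) = A *m X & adjmx (X *m A) = X *m A]).

Definition mx_derivable n (rho : R -> 'M[C]_n) (t : R) : Prop :=
  forall i j, derivable (fun s => complex.Re (rho s i j)) t 1 /\
              derivable (fun s => complex.Im (rho s i j)) t 1.

Definition mx_deriv n (rho : R -> 'M[C]_n) (t : R) : 'M[C]_n :=
  \matrix_(i, j) Complex (derive1 (fun s => complex.Re (rho s i j)) t)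
                         (derive1 (fun s => complex.Im (rho s i j)) t).

Definition rld_fisher n (rho : R -> 'M[C]_n) (t : R) : \bar R :=
  let D := mx_deriv rho t in
  if supp_sub D (rho t) then (complex.Re (\tr (D *m D *m mp_inverse (rho t))))%:E
  else +oo%E.

Definition depolarize n (eps : R) (rho : R -> 'M[C]_n) : R -> 'M[C]_n :=
  fun t => (((1 - eps)%:C)%C *: rho t + ((eps / n%:R)%:C)%C *: 1%:M).

End QDefs.

From HB Require Import structures.
From mathcomp Require Import all_boot all_order all_algebra.
From mathcomp Require Import all_classical all_reals all_analysis.
From mathcomp Require Import complex spectral.
Import Order.TTheory GRing.Theory Num.Theory.
Import numFieldNormedType.Exports.
Local Open Scope ring_scope.
Local Open Scope classical_set_scope.
Local Open Scope complex_scope.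
Set Implicit Arguments. Unset Strict Implicit. Unset Printing Implicit Defensive.

(* Diagonalize the state at theta as rho = U^* diag(l) U with U unitary and
   eigenvalues l >= 0, and write the (Hermitian) derivative D in that basis,
   F = U D U^*; let r_k >= 0 be the squared norm of the k-th row of F.  Then
   - the RLD information equals sum_k r_k / l_k when every row of F with
     l_k = 0 vanishes (the support condition), and +oo otherwise;
   - depolarization keeps U, moves the eigenvalues to (1-eps) l_k + eps/d and
     scales the derivative by (1-eps), hence r_k by (1-eps)^2.
   The theorem thus reduces to a limit of finite sums of reals: each term
   with l_k > 0 or r_k = 0 converges, and a term with l_k = 0 < r_k grows
   like r_k d / eps. *)

Section ComplexAdjoint.
Variable R : realType.
Local Notation C := R[i].

Lemma adjmxE m n (A : 'M[C]_(m, n)) i j : adjmx A i j = Num.conj (A j i).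
Proof. by rewrite /adjmx !mxE. Qed.

Lemma adjmxM m n p (A : 'M[C]_(m, n)) (B : 'M[C]_(n, p)) :
  adjmx (A *m B) = adjmx B *m adjmx A.
Proof. by rewrite /adjmx map_mxM trmx_mul. Qed.

Lemma adjmxK m n (A : 'M[C]_(m, n)) : adjmx (adjmx A) = A.
Proof. by apply/matrixP => i j; rewrite !adjmxE conjCK. Qed.

Lemma conj_real (a : R) : Num.conj (a%:C) = a%:C :> C.
Proof. exact: conjc_real. Qed.

Lemma adjmxZ_real m n (a : R) (A : 'M[C]_(m, n)) :
  adjmx (a%:C *: A) = a%:C *: adjmx A.
Proof. by apply/matrixP => i j; rewrite !mxE rmorphM /= conj_real. Qed.

Lemma hermitian_diag_real n (l : 'I_n -> R) :
  adjmx (diag_mx (\row_k (l k)%:C)) = diag_mx (\row_k (l k)%:C) :> 'M[C]_n.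
Proof.
apply/matrixP => i j; rewrite adjmxE !mxE eq_sym.
by case: eqP => [->|_]; rewrite ?mulr1n ?mulr0n ?rmorph0 ?conj_real.
Qed.

Lemma Re_realM (a : R) (z : C) : complex.Re (a%:C * z) = a * complex.Re z.
Proof. by case: z => x y; rewrite /= mul0r subr0. Qed.

Lemma Re_affine (a : R) (z c : C) :
  complex.Re (a%:C * z + c) = a * complex.Re z + complex.Re c.
Proof. by case: z => x y; case: c => u v; rewrite /= mul0r subr0. Qed.

Lemma Im_affine (a : R) (z c : C) :
  complex.Im (a%:C * z + c) = a * complex.Im z + complex.Im c.
Proof. by case: z => x y; case: c => u v; rewrite /= mul0r addr0. Qed.

End ComplexAdjoint.

Section MoorePenrose.
Variable R : realType.
Local Notation C := R[i].

Definition is_mp_inverse n (A X : 'M[C]_n) : Prop :=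
  [/\ A *m X *m A = A, X *m A *m X = X,
      adjmx (A *m X) = A *m X & adjmx (X *m A) = X *m A].

Lemma is_mp_inverse_uniq n (A X Y : 'M[C]_n) :
  is_mp_inverse A X -> is_mp_inverse A Y -> X = Y.
Proof.
move=> [AXA XAX hAX hXA] [AYA YAY hAY hYA].
have eAX : A *m X = A *m Y.
  rewrite -hAX adjmxM -{1}AYA !adjmxM !mulmxA -adjmxM hAX.
  by rewrite -mulmxA -adjmxM hAY mulmxA AXA.
have eXA : X *m A = Y *m A.
  rewrite -hXA adjmxM -{1}AYA !adjmxM -!mulmxA -[adjmx A *m adjmx X]adjmxM hXA.
  by rewrite mulmxA -adjmxM hYA -!mulmxA [A *m (X *m A)]mulmxA AXA.
by rewrite -XAX eXA -mulmxA eAX mulmxA YAY.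
Qed.

Lemma mp_inverseE n (A X : 'M[C]_n) : is_mp_inverse A X -> mp_inverse A = X.
Proof.
move=> hX; apply: xget_unique; first by case: hX.
by move=> Y hY; exact: is_mp_inverse_uniq hY hX.
Qed.

(* A X is the projection onto the range of A, so D has its range inside that
   of A exactly when this projection fixes D. *)
Lemma supp_sub_mp n (A X D : 'M[C]_n) :
  is_mp_inverse A X -> supp_sub D A = (A *m X *m D == D).
Proof.
move=> [AXA _ _ _]; apply/idP/eqP => [/submxP [Z eZ]|<-].
  have -> : D = A *m Z^T by rewrite -[D]trmxK eZ trmx_mul trmxK.
  by rewrite mulmxA AXA.
by rewrite /supp_sub -mulmxA trmx_mul submxMl.
Qed.

End MoorePenrose.

Section HermitianSquare.
Variable R : realType.
Local Notation C := R[i].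
Variables (n : nat) (E : 'M[C]_n).
Hypothesis E_herm : adjmx E = E.

Lemma herm_sqr_diagE k : (E *m E) k k = \sum_j E k j * Num.conj (E k j).
Proof.
rewrite mxE; apply: eq_bigr => j _.
by rewrite -(adjmxE E j k) E_herm.
Qed.

Lemma herm_sqr_diag_ge0 k : 0 <= (E *m E) k k.
Proof. by rewrite herm_sqr_diagE; apply: sumr_ge0 => j _; exact: mulcJ_ge0. Qed.

Lemma herm_sqr_diag_eq0 k : ((E *m E) k k == 0) = (row k E == 0).
Proof.
rewrite herm_sqr_diagE psumr_eq0 => [|j _]; last exact: mulcJ_ge0.
apply/allP/eqP => [h|Ek0 j _]; last first.
  have := congr1 (fun M : 'rV[C]_n => M 0 j) Ek0.
  by rewrite !mxE /= => ->; rewrite mul0r.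
apply/rowP => j; have := h j (mem_index_enum j).
by rewrite !mxE /= mulf_eq0 conjC_eq0 orbb => /eqP.
Qed.

End HermitianSquare.

Definition rld_info (R : realType) n (A D : 'M[R[i]]_n) : \bar R :=
  if supp_sub D A then (complex.Re (\tr (D *m D *m mp_inverse A)))%:E else +oo%E.

(* The same quantity for a diagonal state with eigenvalues l, when r k is the
   squared norm of the k-th row of the tangent direction. *)
Definition rld_value (R : realType) n (l r : 'I_n -> R) : \bar R :=
  if [forall k, (l k == 0) ==> (r k == 0)] then (\sum_k r k / l k)%:E
  else +oo%E.

Section Eigenbasis.
Variable R : realType.
Local Notation C := R[i].
Variables (n : nat) (U : 'M[C]_n).
Hypotheses (U_coisometry : U *m adjmx U = 1%:M) (U_isometry : adjmx U *m U = 1%:M).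

Local Notation diagR l := (diag_mx (\row_k ((l k)%:C : C))).

Definition udiag (l : 'I_n -> R) : 'M[C]_n := adjmx U *m diagR l *m U.

Definition in_basis (M : 'M[C]_n) : 'M[C]_n := U *m M *m adjmx U.

Lemma in_basisK : cancel in_basis (fun F => adjmx U *m F *m U).
Proof. by move=> M; rewrite /in_basis !mulmxA U_isometry mul1mx -mulmxA U_isometry mulmx1. Qed.

Lemma in_basis_inj : injective in_basis.
Proof. exact: can_inj in_basisK. Qed.

Lemma in_basisM M N : in_basis (M *m N) = in_basis M *m in_basis N.
Proof. by rewrite /in_basis !mulmxA -[_ *m adjmx U *m U]mulmxA U_isometry mulmx1. Qed.

Lemma in_basis_herm M : adjmx M = M -> adjmx (in_basis M) = in_basis M.
Proof. by move=> hM; rewrite /in_basis !adjmxM adjmxK hM mulmxA. Qed.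

Lemma mxtrace_in_basis M : \tr (in_basis M) = \tr M.
Proof. by rewrite /in_basis mxtrace_mulC mulmxA U_isometry mul1mx. Qed.

Lemma in_basis_udiag l : in_basis (udiag l) = diagR l.
Proof.
by rewrite /in_basis /udiag !mulmxA U_coisometry mul1mx -mulmxA U_coisometry mulmx1.
Qed.

Lemma udiagM l1 l2 : udiag l1 *m udiag l2 = udiag (fun k => l1 k * l2 k).
Proof.
apply: in_basis_inj; rewrite in_basisM !in_basis_udiag.
apply/matrixP => i j; rewrite mul_diag_mx !mxE rmorphM.
by case: eqP => _; rewrite ?mulr1n ?mulr0n ?mulr0.
Qed.

Lemma udiag_herm l : adjmx (udiag l) = udiag l.
Proof. by rewrite /udiag !adjmxM adjmxK hermitian_diag_real mulmxA. Qed.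

Lemma udiag_mp_inverse l : is_mp_inverse (udiag l) (udiag (fun k => (l k)^-1)).
Proof.
split; rewrite ?udiagM ?udiag_herm //; congr udiag; apply: funext => k;
  have [->|nz] := eqVneq (l k) 0; rewrite ?invr0 ?mulr0 ?mul0r //.
- by rewrite divfK.
- by rewrite mulVf // mul1r.
Qed.

Lemma udiag_affine (a b : R) l :
  a%:C *: udiag l + b%:C *: 1%:M = udiag (fun k => a * l k + b).
Proof.
apply: in_basis_inj; rewrite in_basis_udiag.
have -> : in_basis (a%:C *: udiag l + b%:C *: 1%:M) =
          a%:C *: in_basis (udiag l) + b%:C *: 1%:M.
  by rewrite /in_basis mulmxDr mulmxDl -!scalemxAr -!scalemxAl mulmx1 U_coisometry.
rewrite in_basis_udiag.
apply/matrixP => i j; rewrite !mxE rmorphD rmorphM.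
by case: eqP => _; rewrite ?mulr1n ?mulr0n ?mulr1 ?mulr0 ?addr0.
Qed.

Lemma supp_sub_udiag D l :
  supp_sub D (udiag l) = [forall k, (l k == 0) ==> (row k (in_basis D) == 0)].
Proof.
rewrite (supp_sub_mp _ (udiag_mp_inverse l)) udiagM -(inj_eq in_basis_inj).
rewrite in_basisM in_basis_udiag; set F := in_basis D.
apply/eqP/forallP => [hF k|hF].
  apply/implyP => /eqP lk0; apply/eqP/rowP => j.
  have := congr1 (fun M : 'M[C]_n => M k j) hF.
  by rewrite mul_diag_mx !mxE lk0 invr0 mulr0 rmorph0 mul0r => <-.
apply/matrixP => k j; rewrite mul_diag_mx !mxE.
have [lk0|nz] := eqVneq (l k) 0; last by rewrite mulfV // mul1r.
have := hF k; rewrite lk0 eqxx /= => /eqP/rowP/(_ j).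
by rewrite !mxE => ->; rewrite mulr0.
Qed.

Lemma mxtrace_mul_udiag M l :
  \tr (M *m udiag l) = \sum_k in_basis M k k * (l k)%:C.
Proof.
rewrite -mxtrace_in_basis in_basisM in_basis_udiag /mxtrace.
by apply: eq_bigr => k _; rewrite mul_mx_diag !mxE.
Qed.

Lemma rld_info_udiag D l : adjmx D = D ->
  rld_info (udiag l) D = rld_value l (fun k => complex.Re ((in_basis D *m in_basis D) k k)).
Proof.
move=> hD; set F := in_basis D; have hF : adjmx F = F := in_basis_herm hD.
have FF_real k : (F *m F) k k = (complex.Re ((F *m F) k k))%:C.
  by rewrite RRe_real // ger0_real // herm_sqr_diag_ge0.
rewrite /rld_info /rld_value supp_sub_udiag.
have -> : [forall k, (l k == 0) ==> (row k F == 0)] =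
          [forall k, (l k == 0) ==> (complex.Re ((F *m F) k k) == 0)].
  apply: eq_forallb => k; congr (_ ==> _).
  by rewrite -herm_sqr_diag_eq0 // {1}FF_real eq_complex /= eqxx andbT.
case: ifP => // _; rewrite (mp_inverseE (udiag_mp_inverse l)) mxtrace_mul_udiag.
rewrite in_basisM (eq_bigr (fun k => (complex.Re ((F *m F) k k) / l k)%:C)) => [|k _].
  by rewrite -rmorph_sum.
by rewrite {1}FF_real rmorphM.
Qed.

Lemma rld_info_udiag_scale D l (a : R) : adjmx D = D ->
  rld_info (udiag l) (a%:C *: D) =
  rld_value l (fun k => a ^+ 2 * complex.Re ((in_basis D *m in_basis D) k k)).
Proof.
move=> hD; rewrite rld_info_udiag ?adjmxZ_real ?hD //; congr rld_value.
apply: funext => k; rewrite /in_basis -scalemxAr -scalemxAl -scalemxAr -scalemxAl.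
by rewrite scalerA -rmorphM -expr2 -/(in_basis D) [in LHS]mxE Re_realM.
Qed.

End Eigenbasis.

Section Spectral.
Variable R : realType.
Local Notation C := R[i].

(* Spectral theorem for Hermitian matrices, via the library's normal case. *)
Lemma hermitian_unitary_diag n (A : 'M[C]_n) : adjmx A = A ->
  exists U (w : 'rV[C]_n), [/\ U *m adjmx U = 1%:M, adjmx U *m U = 1%:M &
                              A = adjmx U *m diag_mx w *m U].
Proof.
move=> hA; have adjE (M : 'M[C]_n) : adjmx M = map_mx Num.conj (M^T).
  by rewrite /adjmx map_trmx.
have nA : A \is normalmx by apply/normalmxP; rewrite -adjE hA.
have eA := orthomx_spectralP nA.
have Pu : spectralmx A \is unitarymx := spectral_unitarymx A.
have Pinv : invmx (spectralmx A) = adjmx (spectralmx A) by rewrite adjE invmx_unitary.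
exists (spectralmx A), (spectral_diag A); split.
- by rewrite adjE; apply/unitarymxP.
- by rewrite -Pinv mulVmx // spectral_unit.
- by rewrite -Pinv.
Qed.

Lemma psd_udiag n (A : 'M[C]_n) : psd A ->
  exists U (l : 'I_n -> R), [/\ U *m adjmx U = 1%:M, adjmx U *m U = 1%:M,
                               forall k, 0 <= l k & A = udiag U l].
Proof.
move=> [hA A_ge0]; have [U [w [hUU hUU' eA]]] := hermitian_unitary_diag hA.
(* w_k is the value of the quadratic form of A at the k-th eigenvector. *)
have w_ge0 k : 0 <= w 0 k.
  set e : 'cV[C]_n := delta_mx k 0.
  have := A_ge0 (adjmx U *m e).
  have -> : adjmx (adjmx U *m e) = (delta_mx 0 k : 'rV[C]_n) *m U.
    rewrite adjmxM adjmxK; congr (_ *m _).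
    by apply/matrixP => i j; rewrite adjmxE !mxE rmorph_nat andbC.
  rewrite eA !mulmxA -[_ *m U *m adjmx U]mulmxA hUU mulmx1.
  rewrite -[_ *m U *m adjmx U]mulmxA hUU mulmx1 /e -rowE -colE !mxE.
  by rewrite eqxx mulr1n.
exists U, (fun k => complex.Re (w 0 k)); split => // [k|].
  by rewrite -ler0c RRe_real ?ger0_real.
rewrite eA /udiag; congr (_ *m diag_mx _ *m _); apply/rowP => k.
by rewrite mxE RRe_real ?ger0_real.
Qed.

End Spectral.

Section Derivative.
Variable R : realType.
Local Notation C := R[i].

Lemma derive1_affine (f : R -> R) (a c t : R) : derivable f t 1 ->
  derive1 (fun s => a * f s + c) t = a * derive1 f t.
Proof.
move=> df; rewrite !derive1E.
have := is_deriveD (is_deriveZ a (derivableP df)) (is_derive_cst c t 1).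
by rewrite addr0 => h; apply: derive_val.
Qed.

Lemma mx_deriv_affine n (rho : R -> 'M[C]_n) (a : R) (B : 'M[C]_n) t :
  mx_derivable rho t ->
  mx_deriv (fun s => a%:C *: rho s + B) t = a%:C *: mx_deriv rho t.
Proof.
move=> drho; apply/matrixP => i j; have [dRe dIm] := drho i j.
have eRe : (fun s => complex.Re ((a%:C *: rho s + B) i j)) =
           (fun s => a * complex.Re (rho s i j) + complex.Re (B i j)).
  by apply: funext => s; rewrite !mxE Re_affine.
have eIm : (fun s => complex.Im ((a%:C *: rho s + B) i j)) =
           (fun s => a * complex.Im (rho s i j) + complex.Im (B i j)).
  by apply: funext => s; rewrite !mxE Im_affine.
rewrite !mxE eRe eIm !derive1_affine //.
by apply/eqP; rewrite eq_complex /= !mul0r subr0 addr0 !eqxx.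
Qed.

Lemma mx_deriv_herm n (rho : R -> 'M[C]_n) t :
  (\forall s \near t, adjmx (rho s) = rho s) -> mx_derivable rho t ->
  adjmx (mx_deriv rho t) = mx_deriv rho t.
Proof.
move=> hrho drho; apply/matrixP => i j; rewrite adjmxE !mxE.
have eRe : derive1 (fun s => complex.Re (rho s j i)) t =
           derive1 (fun s => complex.Re (rho s i j)) t.
  rewrite !derive1E; apply: near_eq_derive; apply: filterS hrho => s hs.
  by rewrite -[in RHS]hs adjmxE; case: (rho s j i).
have eIm : derive1 (fun s => complex.Im (rho s j i)) t =
           - derive1 (fun s => complex.Im (rho s i j)) t.
  rewrite !derive1E -deriveN; last by case: (drho i j).
  apply: near_eq_derive; apply: filterS hrho => s hs.
  change (complex.Im (rho s j i) = - complex.Im (rho s i j)).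
  by rewrite -[in RHS]hs adjmxE; case: (rho s j i) => x y; rewrite /= opprK.
by apply/eqP; rewrite eq_complex /= eRe eIm opprK !eqxx.
Qed.

End Derivative.

Lemma rld_value_pos (R : realType) n (l r : 'I_n -> R) :
  (forall k, 0 < l k) -> rld_value l r = (\sum_k r k / l k)%:E.
Proof.
move=> l_gt0; rewrite /rld_value; case: ifP => // /negbT.
by rewrite negb_forall => /existsP [k]; rewrite (gt_eqF (l_gt0 k)).
Qed.

Lemma one_minus_cvg (R : realType) : (1 - eps) @[eps --> (0 : R)] --> (1 : R).
Proof. by rewrite -[X in _ --> X]subr0; apply: cvgB; [exact: cvg_cst | exact: cvg_id]. Qed.

Lemma near_right_unit (R : realType) : \forall eps \near (0 : R)^'+, 0 < eps < 1.
Proof.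
apply: filterS2 (nbhs_right_gt 0) (nbhs_right_lt ltr01) => eps eps_gt0 eps_lt1.
by rewrite eps_gt0 eps_lt1.
Qed.

Section DepolarizedLimit.
Variable R : realType.
Variables (n : nat) (l r : 'I_n -> R) (c : R).
Hypotheses (l_ge0 : forall k, 0 <= l k) (r_ge0 : forall k, 0 <= r k) (c_gt0 : 0 < c).

Lemma depolarized_eigen_gt0 eps k : 0 < eps < 1 -> 0 < (1 - eps) * l k + eps / c.
Proof.
move=> /andP [eps_gt0 eps_lt1]; apply: ltr_wpDl; last by rewrite divr_gt0.
by rewrite mulr_ge0 // subr_ge0 ltW.
Qed.

Lemma depolarized_num_cvg k : (1 - eps) ^+ 2 * r k @[eps --> (0 : R)] --> r k.
Proof.
suff h : (1 - eps) ^+ 2 * r k @[eps --> (0 : R)] --> (1 * 1) * r k.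
  by rewrite !mul1r in h.
apply: cvgMr_tmp; under eq_fun do rewrite expr2.
by apply: cvgM; exact: one_minus_cvg.
Qed.

Lemma depolarized_den_cvg k : (1 - eps) * l k + eps / c @[eps --> (0 : R)] --> l k.
Proof.
suff h : (1 - eps) * l k + eps / c @[eps --> (0 : R)] --> 1 * l k + 0 / c.
  by rewrite mul1r mul0r addr0 in h.
by apply: cvgD; apply: cvgMr_tmp; [exact: one_minus_cvg | exact: cvg_id].
Qed.

Lemma depolarized_term_ge0 eps k : 0 < eps < 1 ->
  0 <= (1 - eps) ^+ 2 * r k / ((1 - eps) * l k + eps / c).
Proof.
move=> eps01; apply: mulr_ge0; first by rewrite mulr_ge0 ?sqr_ge0.
by rewrite invr_ge0 ltW // depolarized_eigen_gt0.
Qed.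

(* On the support of the state each term converges to its undepolarized
   value (the convention 0 / 0 = 0 covers vanishing terms). *)
Lemma depolarized_term_cvg k : (l k = 0 -> r k = 0) ->
  (1 - eps) ^+ 2 * r k / ((1 - eps) * l k + eps / c) @[eps --> (0 : R)] -->
  r k / l k.
Proof.
move=> supp; have [lk0|lk_neq0] := eqVneq (l k) 0.
  rewrite (supp lk0) lk0 mul0r; under eq_fun do rewrite mulr0 mul0r.
  exact: cvg_cst.
apply: cvgM; first exact: depolarized_num_cvg.
by apply: (cvgV (FF := _)) => //; exact: depolarized_den_cvg.
Qed.

Lemma depolarized_term_cvgy k : l k = 0 -> r k != 0 ->
  (1 - eps) ^+ 2 * r k / ((1 - eps) * l k + eps / c) @[eps --> 0^'+] --> +oo.
Proof.
move=> lk0 rk_neq0; rewrite lk0.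
have rk_gt0 : 0 < r k by rewrite lt_neqAle eq_sym rk_neq0 r_ge0.
under eq_fun do rewrite mulr0 add0r -invf_div.
apply/cvgrVy.
  apply: filterS (near_right_unit R) => eps /andP [eps_gt0 eps_lt1].
  by rewrite !divr_gt0 // mulr_gt0 // exprn_gt0 // subr_gt0.
apply: cvg_at_right_filter.
suff h : eps / c / ((1 - eps) ^+ 2 * r k) @[eps --> (0 : R)] --> 0 / c * (r k)^-1.
  by rewrite mul0r mul0r in h.
apply: cvgM; first by apply: cvgMr_tmp; exact: cvg_id.
by apply: (cvgV (FF := _)) => //; exact: depolarized_num_cvg.
Qed.

Lemma rld_value_depolarized_cvg :
  rld_value (fun k => (1 - eps) * l k + eps / c) (fun k => (1 - eps) ^+ 2 * r k)
    @[eps --> 0^'+] --> rld_value l r.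
Proof.
pose term eps k := (1 - eps) ^+ 2 * r k / ((1 - eps) * l k + eps / c).
have eq_sum : \forall eps \near 0^'+, (\sum_k term eps k)%:E =
    rld_value (fun k => (1 - eps) * l k + eps / c) (fun k => (1 - eps) ^+ 2 * r k).
  apply: filterS (near_right_unit R) => eps eps01.
  by rewrite rld_value_pos // => k; exact: depolarized_eigen_gt0.
apply: cvg_trans (near_eq_cvg eq_sum) _.
rewrite /rld_value; case: ifP => [/forallP supp|/negbT].
  apply: cvg_EFin; first exact: nearW.
  apply: cvg_at_right_filter; apply: cvg_big => [|k _]; first exact: add_continuous.
  by apply: depolarized_term_cvg => /eqP lk0; apply/eqP; exact: implyP (supp k) lk0.
rewrite negb_forall => /existsP [k0]; rewrite negb_imply => /andP [/eqP lk0 rk0].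
apply/cvgeryP; apply: ger_cvgy (depolarized_term_cvgy lk0 rk0).
apply: filterS (near_right_unit R) => eps eps01.
rewrite (bigD1 k0) //= lerDl; apply: sumr_ge0 => k _.
exact: depolarized_term_ge0.
Qed.

End DepolarizedLimit.

(* Main theorem: in the eigenbasis of rho theta both sides are rld_value's,
   and the limit is rld_value_depolarized_cvg with c = d. *)
Theorem mainTheorem2 (R : realType) (d : nat) (Theta : set R)
    (rho : R -> 'M[R[i]]_d) (theta : R) :
  (0 < d)%N ->
  open Theta ->
  (forall t, Theta t -> density (rho t)) ->
  (forall t, Theta t -> mx_derivable rho t) ->
  Theta theta ->
  (fun eps : R => rld_fisher (depolarize eps rho) theta) @ 0^'+
    --> rld_fisher rho theta.
Proof.
move=> d_gt0 Theta_open rho_density rho_derivable Theta_theta.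
have [U [l [UU' U'U l_ge0 rho_eigen]]] := psd_udiag (rho_density _ Theta_theta).1.
set D := mx_deriv rho theta.
have D_herm : adjmx D = D.
  apply: mx_deriv_herm (rho_derivable _ Theta_theta).
  apply: filterS (open_nbhs_nbhs (conj Theta_open Theta_theta)) => s Ts.
  by case: (rho_density _ Ts) => [[]].
pose r k := complex.Re ((in_basis U D *m in_basis U D) k k).
have r_ge0 k : 0 <= r k.
  have := herm_sqr_diag_ge0 (in_basis_herm U D_herm) k.
  by rewrite lecE => /andP [_].
have -> : rld_fisher rho theta = rld_value l r.
  by rewrite -[LHS]/(rld_info (rho theta) D) rho_eigen rld_info_udiag.
have rld_eps eps : rld_fisher (depolarize eps rho) theta =
    rld_value (fun k => (1 - eps) * l k + eps / d%:R) (fun k => (1 - eps) ^+ 2 * r k).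
  rewrite -[LHS]/(rld_info _ (mx_deriv (depolarize eps rho) theta)).
  rewrite /depolarize mx_deriv_affine /=; last exact: rho_derivable.
  rewrite rho_eigen udiag_affine //.
  exact: rld_info_udiag_scale.
under eq_fun do rewrite rld_eps.
by apply: rld_value_depolarized_cvg; rewrite ?ltr0n.
Qed.
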